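(* Let $(\Delta,R)$ be a gentle quiver, $\rho=(\alpha,\beta)\in R$ an isolated relation, and $(\Delta',R')$ the quiver with relations obtained from $(\Delta,R)$ by completing $\rho$. Then: (1) $(\Delta',R')$ is a gentle quiver if and only if $\mathbb Z\cdot\rho\neq\{\rho\}$ (here $\mathbb Z\cdot\rho$ is the $\Phi$-orbit of $\rho$ in $\mathcal N$). (2) If $\mathbb Z\cdot\rho\ne\{\rho\}$, then $\mathcal N_{(\Delta',R')}=\mathcal N_{(\Delta,R)}\setminus\{\rho\}$ and \[ \mathcal N_{(\Delta',R')}/\mathbb Z = \{\mathcal O'\in\mathcal N_{(\Delta,R)}/\mathbb Z \mid \mathcal O'\ne\mathbb Z\cdot\rho\}\cup\{(\mathbb Z\cdot\rho)\setminus\{\rho\}\}; \] moreover $\mathcal C_{(\Delta',R')}=\mathcal C_{(\Delta,R)}\cup\{\alpha,\beta,\gamma_\rho\}$ and $\mathcal C_{(\Delta',R')}/\mathbb Z=\mathcal C_{(\Delta,R)}/\mathbb Z\cup\{\{\alpha,\beta,\gamma_\rho\}\}$.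
   Context: A quiver $\Delta$ has finite vertex set $\Delta_0$, arrow set $\Delta_1$, maps $s,t$. A path of length $n\ge1$ is $(\alpha_1,\dots,\alpha_n)$ with $s\alpha_i=t\alpha_{i+1}$. A gentle quiver is $(\Delta,R)$ with $\Delta$ connected, $R$ a set of paths of length 2, such that: (1) each vertex is start of at most two arrows and end of at most two arrows; (2) for each arrow $\alpha$ at most one $\beta$ with $s\beta=t\alpha$, $(\beta,\alpha)\notin R$ and at most one $\gamma$ with $t\gamma=s\alpha$, $(\alpha,\gamma)\notin R$; (3) for each $\alpha$ at most one $\beta$ with $(\beta,\alpha)\in R$ and at most one $\gamma$ with $(\alpha,\gamma)\in R$; (4) for some $n$ every path of length $n$ has a subpath in $R$. Fix $\sigma,\tau:\Delta_1\to\{\pm1\}$ with distinct arrows of same start having opposite $\sigma$, distinct arrows of same end opposite $\tau$, and for $s\alpha=t\beta$: $(\alpha,\beta)\in R$ iff $\sigma\alpha=\tau\beta$; $\sigma\omega=\sigma\alpha_n,\tau\omega=\tau\alpha_1$. Permitted paths: no consecutive pair in $R$, plus trivial $1_{x,\varepsilon}$ ($s=t=x$, $\sigma=\varepsilon,\tau=-\varepsilon$); maximal if no arrow $\alpha$ with $s\alpha=t\omega,\sigma\alpha=-\tau\omega$ and no $\beta$ with $t\beta=s\omega,\tau\beta=-\sigma\omega$; set $\mathcal M$. Antipaths: all consecutive pairs in $R$, plus trivial $1'_{x,\varepsilon}$ ($\sigma=\tau=\varepsilon$); maximal if no $\alpha$ with $s\alpha=t\omega,\sigma\alpha=\tau\omega$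 and no $\beta$ with $t\beta=s\omega,\tau\beta=\sigma\omega$; set $\mathcal N$. $\phi:\mathcal M\to\mathcal N$, $\omega\mapsto$ unique $\omega'$ with $t\omega'=t\omega,\tau\omega'=-\tau\omega$; $\psi:\mathcal N\to\mathcal M$, $\omega\mapsto$ unique $\omega'$ with $s\omega'=s\omega,\sigma\omega'=-\sigma\omega$; $\Phi=\phi\psi$ acting on $\mathcal N$, orbit set $\mathcal N/\mathbb Z$. $\mathcal C$: arrows $\alpha$ with $(\alpha)$ not a subpath of a maximal antipath; $\Psi:\mathcal C\to\mathcal C$, $\alpha\mapsto$ unique $\beta\in\mathcal C$ with $t\beta=s\alpha,\tau\beta=\sigma\alpha$; orbit set $\mathcal C/\mathbb Z$. Subscripts indicate the gentle quiver these sets are formed in. A relation $(\alpha,\beta)\in R$ is isolated if the path $(\alpha,\beta)$ belongs to $\mathcal N$. For a set $R_0$ of isolated relations, the quiver obtained by completing the relations from $R_0$ is $(\Delta',R')$ with $\Delta'_0=\Delta_0$, $\Delta'_1=\Delta_1\cup\{\gamma_\rho\mid\rho\in R_0\}$ with new arrows $\gamma_\rho$, where for $\rho=(\alpha,\beta)$ the arrow $\gamma_\rho$ goes from $t\alpha$ to $s\beta$, and $R'=R\cup\{(\gamma_\rho,\alpha),(\beta,\gamma_\rho)\mid \rho=(\alpha,\beta)\in R_0\}$. *)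

From mathcomp Require Export all_boot.
From mathcomp Require Export boolp classical_sets.
Set Implicit Arguments. Unset Strict Implicit. Unset Printing Implicit Defensive.
Local Open Scope classical_set_scope.

(* A set R of paths of length 2 is a relation R : rel A,
   R x y meaning (x,y) \in R (so s x = t y is required).
   A path (a_1,...,a_n) is the sequence [:: a_1; ...; a_n] with
   s a_i = t a_(i+1).  Signs +1/-1 are encoded by true/false, so "-e" is ~~ e. *)

Definition gpath_ (V A : Type) := ((V * bool) + (A * seq A))%type.
Notation gpath := gpath_.

Section Gentle.
Context {V A : finType} (s t : A -> V) (R : rel A).

Definition consec (p : seq A) := zip p (behead p).

Definition is_path (p : seq A) : bool :=
  (p != [::]) && all (fun xy => s xy.1 == t xy.2) (consec p).

Definition has_rel (p : seq A) : bool := has (fun xy => R xy.1 xy.2) (consec p).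

Definition qadj : rel V := fun x y =>
  [exists e : A, ((s e == x) && (t e == y)) || ((s e == y) && (t e == x))].

Definition qconnected : Prop := forall x y : V, connect qadj x y.

Definition gentle : Prop :=
  [/\ qconnected /\ (forall x y, R x y -> s x = t y),
      (forall x : V, #|[pred b | s b == x]| <= 2 /\ #|[pred b | t b == x]| <= 2),
      (forall a : A, #|[pred b | (s b == t a) && ~~ R b a]| <= 1 /\
                     #|[pred c | (t c == s a) && ~~ R a c]| <= 1),
      (forall a : A, #|[pred b | R b a]| <= 1 /\ #|[pred c | R a c]| <= 1)
    & exists n, 0 < n /\
        (forall p : seq A, size p = n -> is_path p -> has_rel p)].

Definition sign_ok (sg tau : A -> bool) : Prop :=
  [/\ (forall a b, a != b -> s a = s b -> sg a = ~~ sg b),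
      (forall a b, a != b -> t a = t b -> tau a = ~~ tau b)
    & (forall a b, s a = t b -> R a b = (sg a == tau b))].

(* Generalised paths: inl (x, e) is the trivial path at x with parameter e
   (1_{x,e} or 1'_{x,e}); inr (a, p) is the path (a :: p). *)
Notation gpath := (gpath_ V A).

Definition gt (g : gpath) : V :=
  match g with inl (x, _) => x | inr (a, _) => t a end.
Definition gs (g : gpath) : V :=
  match g with inl (x, _) => x | inr (a, p) => s (last a p) end.
Definition arrows (g : gpath) : seq A :=
  match g with inl _ => [::] | inr (a, p) => a :: p end.

Context (sg tau : A -> bool).

(* sigma, tau of permitted paths: 1_{x,e} has sigma = e, tau = -e *)
Definition psg (g : gpath) : bool :=
  match g with inl (_, e) => e | inr (a, p) => sg (last a p) end.
Definition ptau (g : gpath) : bool :=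
  match g with inl (_, e) => ~~ e | inr (a, _) => tau a end.
(* sigma, tau of antipaths: 1'_{x,e} has sigma = tau = e *)
Definition asg (g : gpath) : bool :=
  match g with inl (_, e) => e | inr (a, p) => sg (last a p) end.
Definition atau (g : gpath) : bool :=
  match g with inl (_, e) => e | inr (a, _) => tau a end.

Definition permitted (g : gpath) : bool :=
  match g with
  | inl _ => true
  | inr (a, p) => is_path (a :: p) && ~~ has_rel (a :: p)
  end.

Definition antipath (g : gpath) : bool :=
  match g with
  | inl _ => true
  | inr (a, p) => is_path (a :: p) && all (fun xy => R xy.1 xy.2) (consec (a :: p))
  end.

Definition maxperm (g : gpath) : bool :=
  [&& permitted g,
      ~~ [exists a : A, (s a == gt g) && (sg a == ~~ ptau g)] &
      ~~ [exists b : A, (t b == gs g) && (tau b == ~~ psg g)]].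

Definition maxanti (g : gpath) : bool :=
  [&& antipath g,
      ~~ [exists a : A, (s a == gt g) && (sg a == atau g)] &
      ~~ [exists b : A, (t b == gs g) && (tau b == asg g)]].

Definition Mset : set gpath := [set g | maxperm g].
Definition Nset : set gpath := [set g | maxanti g].

Definition phi_rel (w w' : gpath) : Prop :=
  [/\ maxperm w, maxanti w', gt w' = gt w & atau w' = ~~ ptau w].
Definition psi_rel (w w' : gpath) : Prop :=
  [/\ maxanti w, maxperm w', gs w' = gs w & psg w' = ~~ asg w].
Definition Phi_rel (w w'' : gpath) : Prop :=
  exists w', psi_rel w w' /\ phi_rel w' w''.

Definition Cset : set A :=
  [set a | ~ exists w, Nset w /\ a \in arrows w].
Definition Psi_rel (a b : A) : Prop :=
  [/\ Cset a, Cset b, t b = s a & tau b = sg a].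

End Gentle.

Fixpoint iter_rel {T : Type} (F : T -> T -> Prop) (n : nat) (x y : T) : Prop :=
  match n with
  | 0 => x = y
  | n'.+1 => exists z, F x z /\ iter_rel F n' z y
  end.

Definition zorbit {T : Type} (F : T -> T -> Prop) (x : T) : set T :=
  [set y | exists n, iter_rel F n x y \/ iter_rel F n y x].

Definition orbits {T : Type} (F : T -> T -> Prop) (X : set T) : set (set T) :=
  [set O | exists x, X x /\ O = zorbit F x].

(* Completion of the isolated relation (al, be): new arrow None = gamma_rho
   from t al to s be, new relations (gamma, al) and (be, gamma). *)
Section Completion.
Context {V A : finType} (s t : A -> V) (R : rel A) (sg tau : A -> bool) (al be : A).

Definition cs (o : option A) : V := match o with Some a => s a | None => t al end.
Definition ct (o : option A) : V := match o with Some a => t a | None => s be end.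
Definition cR : rel (option A) := fun x y =>
  match x, y with
  | Some a, Some b => R a b
  | None, Some a => a == al
  | Some b, None => b == be
  | None, None => false
  end.
(* extension of the sign functions to the new arrow, forced by
   (gamma,al) \in R' iff sg gamma = tau al, (be,gamma) \in R' iff sg be = tau gamma *)
Definition csg (o : option A) : bool := match o with Some a => sg a | None => tau al end.
Definition ctau (o : option A) : bool := match o with Some a => tau a | None => sg be end.

Definition isolated : bool := R al be && maxanti s t R sg tau (inr (al, [:: be])).

End Completion.

Definition emb {V A : finType} (g : gpath V A) : gpath V (option A) :=
  match g with inl xe => inl xe | inr (a, p) => inr (Some a, map Some p) end.

Set Implicit Arguments. Unset Strict Implicit. Unset Printing Implicit Defensive.
Local Open Scope classical_set_scope.

(* Give every arrow a the two ports S a = (s a, sg a) and T a = (t a, tau a); the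
   sign conditions make S and T injective.  Antipaths are then the chains
   a_1 ... a_n with S a_i = T a_(i+1), and permitted paths the chains with
   (s a_i, ~~ sg a_i) = T a_(i+1), so maximal antipaths and maximal permitted
   paths are the maximal chains of two partial bijections on the arrows; such a
   chain is determined by its first port and by its last port, and Phi, Psi are
   successor maps of partial bijections.
   Completing rho = (al, be) adds gamma with S gamma = T al and T gamma = S be.
   As S al = T be, the arrows al, be, gamma form a cycle of antipath links which
   no maximal antipath meets: N' = N \ {rho}, and {al, be, gamma} is a new
   Psi-orbit in C'.  Phi' is Phi with rho cut out of its cycle, the permitted path
   psi(rho) gamma psi(w) taking w directly to Phi (Phi w) when Phi w = rho.
   Finally the completion is gentle iff its permitted paths have bounded length.
   A long permitted path meets gamma twice, and the permitted path strictly
   between two consecutive occurrences of gamma is a maximal permitted path o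
   with psi rho = o and phi o = rho; conversely such an o closes up with gamma
   into a permitted cycle.  So the completion is gentle iff Phi does not fix rho. *)

(** * Chains of a partial bijection *)

Section Links.
Variables (A : finType) (H : eqType) (K T : A -> H).

Definition link : rel A := fun x y => K x == T y.

Lemma link_path_pred a p w : path link a p -> w \in a :: p ->
  w = a \/ exists2 u, u \in a :: p & K u = T w.
Proof.
elim: p a => [|b p IH] a /=; first by rewrite inE => _ /eqP; left.
move=> /andP[/eqP Kab Hp]; rewrite inE => /orP[/eqP->|Hw]; first by left.
right; have [->|[u Hu Ku]] := IH b Hp Hw; first by exists a; rewrite ?inE ?eqxx.
by exists u; rewrite // inE Hu orbT.
Qed.

Lemma link_path_succ a p w : path link a p -> w \in a :: p ->
  w = last a p \/ exists2 u, u \in a :: p & K w = T u.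
Proof.
elim: p a => [|b p IH] a /=; first by rewrite inE => _ /eqP; left.
move=> /andP[/eqP Kab Hp]; rewrite inE => /orP[/eqP->|Hw].
  by right; exists b; rewrite ?inE ?eqxx ?orbT.
have [->|[u Hu Ku]] := IH b Hp Hw; first by left.
by right; exists u; rewrite // inE Hu orbT.
Qed.

Hypotheses (K_inj : injective K) (T_inj : injective T).

Lemma link_path_uniq a p : path link a p -> (forall c, K c != T a) -> uniq (a :: p).
Proof.
move=> /(pathP a) Hp Ha.
have Kn i : i < size p -> K (nth a (a :: p) i) = T (nth a (a :: p) i.+1).
  by move/Hp/eqP.
have nth_neq i j : i < j -> j < size (a :: p) -> nth a (a :: p) i != nth a (a :: p) j.
  elim: i j => [|i IH] [|j] // ij jp; apply/eqP => E.
    by have /eqP := Ha (nth a (a :: p) j); rewrite Kn // -[nth _ _ j.+1]E.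
  have Kij : K (nth a (a :: p) i) = K (nth a (a :: p) j).
    have jp' : j < size p by [].
    by rewrite (Kn i (@ltn_trans j i _ ij jp')) E -Kn.
  by have /eqP := IH j ij (ltnW jp); rewrite (K_inj Kij).
apply/(uniqP a) => i j ip jp E.
by case: (ltngtP i j) => // ij; [move: (nth_neq i j ij jp) | move: (nth_neq j i ij ip)];
  rewrite E eqxx.
Qed.

Lemma link_path_eq_head a p b q : path link a p -> path link b q -> T a = T b ->
  (forall c, T c != K (last a p)) -> (forall c, T c != K (last b q)) ->
  a :: p = b :: q.
Proof.
move=> + + /T_inj ab; subst b; elim: p q a => [|c p IH] [|d q] a //=.
- by move=> _ /andP[/eqP Kad _] /(_ d); rewrite Kad eqxx.
- by move=> /andP[/eqP Kac _] _ _ /(_ c); rewrite Kac eqxx.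
move=> /andP[/eqP Kac Hp] /andP[/eqP Kad Hq] Hl1 Hl2.
have cd : c = d by apply: T_inj; rewrite -Kac -Kad.
by subst d; case: (IH q c Hp Hq Hl1 Hl2) => ->.
Qed.

Definition link_succ (a : A) : option A := [pick b | T b == K a].

Fixpoint link_walk n a : seq A :=
  if n is n'.+1 then
    if link_succ a is Some b then b :: link_walk n' b else [::]
  else [::].

Lemma link_walk_path n a : path link a (link_walk n a).
Proof.
elim: n a => //= n IH a; rewrite /link_succ; case: pickP => //= b /eqP Tb.
by rewrite /link Tb eqxx IH.
Qed.

Lemma link_walk_end n a :
  size (link_walk n a) = n \/ forall c, T c != K (last a (link_walk n a)).
Proof.
elim: n a => [|n IH] a /=; first by left.
rewrite /link_succ; case: pickP => [b _|none] /=.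
  by have [->|?] := IH b; [left | right].
by right=> c; apply/negP => Tc; have := none c; rewrite Tc.
Qed.

Lemma exists_link_path_from a : (forall c, K c != T a) ->
  exists p, path link a p /\ forall c, T c != K (last a p).
Proof.
move=> Ha; exists (link_walk #|A| a); split; first exact: link_walk_path.
have [size_walk|//] := link_walk_end #|A| a.
have /card_uniqP := link_path_uniq (link_walk_path #|A| a) Ha.
by move=> card_walk; have := max_card (mem (a :: link_walk #|A| a));
  rewrite card_walk /= size_walk ltnn.
Qed.

Lemma link_cycle_succ_closed c x y : cycle link c -> x \in c -> link x y -> y \in c.
Proof.
move=> Hc Hx /eqP Kxy; have /eqP := next_cycle Hc Hx.
by rewrite Kxy => /T_inj ->; rewrite mem_next.
Qed.

Lemma link_cycle_pred_closed c x y : cycle link c -> x \in c -> link y x -> y \in c.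
Proof.
move=> Hc Hx /eqP Kyx; have /eqP := prev_cycle Hc Hx.
by rewrite -Kyx => /K_inj <-; rewrite mem_prev.
Qed.

Lemma link_cycle_last c a p x : cycle link c -> path link a p ->
  x \in a :: p -> x \in c -> last a p \in c.
Proof.
move=> Hc; elim: p a x => [|b p IH] a x /=; first by rewrite inE => _ /eqP ->.
move=> /andP[Hab Hp]; rewrite inE => /orP[/eqP -> Hac|Hx Hxc].
  by apply: (IH b b Hp); rewrite ?mem_head // (link_cycle_succ_closed Hc Hac Hab).
exact: IH Hp Hx Hxc.
Qed.

End Links.

Lemma rev_link_path (A : finType) (H : eqType) (K T : A -> H) a p :
  path (link K T) a p -> path (link T K) (last a p) (rev (belast a p)).
Proof.
by rewrite rev_path; apply: sub_path => x y; rewrite /link eq_sym.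
Qed.

Lemma last_rev_belast (A : Type) (a : A) p : last (last a p) (rev (belast a p)) = a.
Proof. by elim: p a => //= b p IH a; rewrite rev_cons last_rcons. Qed.

Lemma exists_link_path_to (A : finType) (H : eqType) (K T : A -> H) z :
  injective T -> (forall c, T c != K z) ->
  exists a p, [/\ path (link K T) a p, last a p = z & forall c, K c != T a].
Proof.
move=> T_inj /(exists_link_path_from T_inj) [p [Hp Hl]].
by exists (last z p), (rev (belast z p)); rewrite last_rev_belast; split;
  rewrite // rev_link_path.
Qed.

Lemma link_path_eq_tail (A : finType) (H : eqType) (K T : A -> H) a p b q :
  injective K -> path (link K T) a p -> path (link K T) b q ->
  K (last a p) = K (last b q) ->
  (forall c, K c != T a) -> (forall c, K c != T b) -> a :: p = b :: q.
Proof.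
move=> K_inj /rev_link_path Hp /rev_link_path Hq Kl Ha Hb.
have := link_path_eq_head K_inj Hp Hq Kl; rewrite !last_rev_belast => /(_ Ha Hb).
by move/(congr1 rev); rewrite !rev_cons !revK -!lastI.
Qed.

(** * Generalised paths as chains *)

(* A trivial path inl (x, e) is the empty chain at the port tr (x, e) = (x, tau):
   tr is id for antipaths (1'_(x,e) has tau = e) and sflip for permitted paths
   (1_(x,e) has tau = -e). *)
Section GPaths.
Variables (V A : finType) (K T : A -> V * bool) (tr : V * bool -> V * bool).
Implicit Types (g : gpath V A).

Definition ghead g := match g with inl xe => tr xe | inr (a, _) => T a end.
Definition gtail g := match g with inl xe => tr xe | inr (a, p) => K (last a p) end.
Definition glinked g :=
  match g with inl _ => true | inr (a, p) => path (link K T) a p end.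
Definition gmaximal g : Prop :=
  [/\ glinked g, forall c, K c != ghead g & forall c, T c != gtail g].

Definition gcat g1 g2 : gpath V A :=
  if arrows g1 ++ arrows g2 is a :: p then inr (a, p) else g1.

Lemma gcat_spec g1 g2 : glinked g1 -> glinked g2 -> gtail g1 = ghead g2 ->
  [/\ glinked (gcat g1 g2), ghead (gcat g1 g2) = ghead g1,
      gtail (gcat g1 g2) = gtail g2 & arrows (gcat g1 g2) = arrows g1 ++ arrows g2].
Proof.
case: g1 => [x1|[a p]]; case: g2 => [x2|[b q]] //= Hg1 Hg2 E.
  by rewrite /gcat /= cats0.
by rewrite /gcat /= cat_path last_cat Hg1 /= /link E eqxx Hg2.
Qed.

Lemma gmaximal_cycle_notin c x g : injective T -> cycle (link K T) c ->
  gmaximal g -> x \in c -> x \notin arrows g.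
Proof.
case: g => [//|[a p]] T_inj Hc [Hg _ Hl] /= xc; apply/negP => xg.
have /(next_cycle Hc)/eqP Kl := link_cycle_last T_inj Hc Hg xg xc.
by move: (Hl (next c (last a p))); rewrite /= Kl eqxx.
Qed.

Hypotheses (K_inj : injective K) (T_inj : injective T) (tr_inj : injective tr).

Lemma gmaximal_eq_head g1 g2 : gmaximal g1 -> gmaximal g2 -> ghead g1 = ghead g2 -> g1 = g2.
Proof.
case: g1 => [x1|[a p]]; case: g2 => [x2|[b q]] /=.
- by move=> _ _ /tr_inj ->.
- by move=> [_ _ /(_ b) /eqP Tb] _ E; case: Tb.
- by move=> _ [_ _ /(_ a) /eqP Ta] E; case: Ta.
move=> [Hp _ Hl1] [Hq _ Hl2] E.
by case: (link_path_eq_head T_inj Hp Hq E Hl1 Hl2) => -> ->.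
Qed.

Lemma gmaximal_eq_tail g1 g2 : gmaximal g1 -> gmaximal g2 -> gtail g1 = gtail g2 -> g1 = g2.
Proof.
case: g1 => [x1|[a p]]; case: g2 => [x2|[b q]] /=.
- by move=> _ _ /tr_inj ->.
- by move=> [_ /(_ (last b q)) /eqP Kb _] _ E; case: Kb.
- by move=> _ [_ /(_ (last a p)) /eqP Ka _] E; case: Ka.
move=> [Hp Ha _] [Hq Hb _] E.
by case: (link_path_eq_tail K_inj Hp Hq E Ha Hb) => -> ->.
Qed.

Variable tr_inv : V * bool -> V * bool.
Hypothesis tr_invK : cancel tr_inv tr.

Lemma gmaximal_exists_head h : (forall c, K c != h) -> exists g, gmaximal g /\ ghead g = h.
Proof.
move=> Hh; case: (pickP (fun a => T a == h)) => [a /eqP Ta|noT].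
  have Ha : forall c, K c != T a by rewrite Ta.
  by have [p [Hp Hl]] := exists_link_path_from K_inj Ha; exists (inr (a, p)).
exists (inl (tr_inv h)); rewrite /gmaximal /= tr_invK; split => //; split => // c.
by apply/negP => /eqP Tc; have := noT c; rewrite Tc eqxx.
Qed.

Lemma gmaximal_exists_tail h : (forall c, T c != h) -> exists g, gmaximal g /\ gtail g = h.
Proof.
move=> Hh; case: (pickP (fun a => K a == h)) => [z /eqP Kz|noK].
  have Hz : forall c, T c != K z by rewrite Kz.
  have [a [p [Hp Hl Ha]]] := exists_link_path_to T_inj Hz.
  by exists (inr (a, p)); rewrite /gmaximal /= Hl Kz.
exists (inl (tr_inv h)); rewrite /gmaximal /= tr_invK; split => //; split => // c.
by apply/negP => /eqP Kc; have := noK c; rewrite Kc eqxx.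
Qed.

End GPaths.

(** * Antipaths and permitted paths *)

Definition sflip {V : Type} (h : V * bool) := (h.1, ~~ h.2).

Lemma sflipK {V : Type} : involutive (@sflip V).
Proof. by case=> x e; rewrite /sflip negbK. Qed.

Lemma sflip_inj {V : Type} : injective (@sflip V).
Proof. exact: inv_inj sflipK. Qed.

Lemma sign_opp (V : eqType) (p q : V * bool) : p != q -> p.1 = q.1 -> p.2 = ~~ q.2.
Proof. by case: p q => [x b] [y c] /= + xy; rewrite xy xpair_eqE eqxx; case: b; case: c. Qed.

Definition port {V A : Type} (f : A -> V) (e : A -> bool) a := (f a, e a).
Definition negport {V A : Type} (f : A -> V) (e : A -> bool) a := sflip (port f e a).

Lemma all_consec (A : finType) (f : pred (A * A)) a p :
  all f (consec (a :: p)) = path (fun x y => f (x, y)) a p.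
Proof. by elim: p a => //= b p IH a; rewrite -IH. Qed.

Lemma has_consec (A : finType) (f : pred (A * A)) a p :
  has f (consec (a :: p)) = ~~ path (fun x y => ~~ f (x, y)) a p.
Proof. by elim: p a => //= b p IH a; rewrite IH negb_and negbK. Qed.

Lemma card_fiber_le1 (A : finType) (H : eqType) (P : pred A) (f : A -> H) y :
  injective f -> (forall x, P x = (f x == y)) -> #|P| <= 1.
Proof.
move=> f_inj Pf; apply/card_le1_eqP => x z; rewrite !unfold_in !Pf => /eqP fx /eqP fz.
by apply: f_inj; rewrite fx fz.
Qed.

Lemma card_sign_le2 (A : finType) (P : pred A) (e : A -> bool) :
  (forall a b, a != b -> P a -> P b -> e a = ~~ e b) -> #|P| <= 2.
Proof.
move=> opp; rewrite -card_bool; apply: (@leq_card_in _ _ e) => a b Pa Pb eab.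
by apply: contraTeq isT => /opp /(_ Pa Pb); rewrite eab; case: (e b).
Qed.

Lemma Psi_relP (V A : finType) (s t : A -> V) (R : rel A) (sg tau : A -> bool) a b :
  Psi_rel s t R sg tau a b <->
  [/\ Cset s t R sg tau a, Cset s t R sg tau b & port t tau b = port s sg a].
Proof. by rewrite /Psi_rel /port; split=> [[? ? -> ->] | [? ? [-> ->]]]. Qed.

Section Signs.
Variables (V A : finType) (s t : A -> V) (R : rel A) (sg tau : A -> bool).
Hypothesis so : sign_ok s t R sg tau.
Hypothesis R_st : forall x y, R x y -> s x = t y.

Local Notation S := (port s sg).
Local Notation T := (port t tau).
Local Notation nS := (negport s sg).

Lemma port_s_inj : injective S.
Proof.
case: so => sg_opp _ _ a b [sab sgab]; apply/eqP; apply: contraT => ab.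
by move: (sg_opp a b ab sab); rewrite sgab; case: (sg b).
Qed.

Lemma port_t_inj : injective T.
Proof.
case: so => _ tau_opp _ a b [tab tauab]; apply/eqP; apply: contraT => ab.
by move: (tau_opp a b ab tab); rewrite tauab; case: (tau b).
Qed.

Lemma negport_s_inj : injective nS.
Proof. by move=> a b /sflip_inj /port_s_inj. Qed.

Lemma R_port x y : R x y = (S x == T y).
Proof.
case: so => _ _ R_sign; rewrite /port xpair_eqE.
have [st|] := eqVneq (s x) (t y); first exact: R_sign.
by apply: contraNF => /R_st ->.
Qed.

Lemma free_negport x y : ((s x == t y) && ~~ R x y) = (nS x == T y).
Proof.
rewrite R_port /negport /sflip /port !xpair_eqE /=.
by case: (s x == t y); case: (sg x); case: (tau y).
Qed.

Lemma antipath_glinked g : antipath s t R g = glinked S T g.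
Proof.
case: g => [//|[a p]] /=; rewrite /is_path /= !all_consec -path_relI.
apply: eq_path => x y /=; rewrite /link -R_port.
by case Rxy: (R x y); rewrite ?andbF // (R_st Rxy) eqxx.
Qed.

Lemma permitted_glinked g : permitted s t R g = glinked nS T g.
Proof.
case: g => [//|[a p]] /=; rewrite /is_path /has_rel /= all_consec has_consec negbK.
by rewrite -path_relI; apply: eq_path => x y /=; rewrite /link -free_negport.
Qed.

Lemma maximal_boolP (K T' : A -> V * bool) (b : bool) (u v : V * bool) :
  reflect [/\ b, forall a, K a != u & forall a, T' a != v]
          [&& b, ~~ [exists a, K a == u] & ~~ [exists a, T' a == v]].
Proof.
rewrite !negb_exists; apply: (iffP and3P).
  by case=> -> /forallP ? /forallP ?.
by case=> -> ? ?; split => //; apply/forallP.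
Qed.

Lemma maxantiP g : maxanti s t R sg tau g <-> gmaximal S T id g.
Proof.
have [hdg tlg] : (gt t g, atau tau g) = ghead T id g /\ (gs s g, asg sg g) = gtail S id g.
  by case: g => [[]|[]].
have hd : [exists a, (s a == gt t g) && (sg a == atau tau g)] = [exists a, S a == ghead T id g].
  by apply: eq_existsb => a; rewrite -xpair_eqE hdg.
have tl : [exists b, (t b == gs s g) && (tau b == asg sg g)] = [exists b, T b == gtail S id g].
  by apply: eq_existsb => b; rewrite -xpair_eqE tlg.
rewrite /maxanti antipath_glinked hd tl; exact: iff_sym (rwP (maximal_boolP _ _ _ _ _)).
Qed.

Lemma maxpermP g : maxperm s t R sg tau g <-> gmaximal nS T sflip g.
Proof.
have [hdg tlg] : (gt t g, ~~ ptau tau g) = sflip (ghead T sflip g) /\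
                 (gs s g, ~~ psg sg g) = gtail nS sflip g.
  by case: g => [[]|[]].
have hd : [exists a, (s a == gt t g) && (sg a == ~~ ptau tau g)] =
          [exists a, nS a == ghead T sflip g].
  apply: eq_existsb => a; rewrite -xpair_eqE hdg /negport /port.
  by apply/eqP/eqP => [->|<-]; rewrite sflipK.
have tl : [exists b, (t b == gs s g) && (tau b == ~~ psg sg g)] =
          [exists b, T b == gtail nS sflip g].
  by apply: eq_existsb => b; rewrite -xpair_eqE tlg.
rewrite /maxperm permitted_glinked hd tl; exact: iff_sym (rwP (maximal_boolP _ _ _ _ _)).
Qed.

Lemma phi_relP w w' : phi_rel s t R sg tau w w' <->
  [/\ gmaximal nS T sflip w, gmaximal S T id w' & ghead T id w' = sflip (ghead T sflip w)].
Proof.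
have -> : ghead T sflip w = (gt t w, ptau tau w) by case: w => [[]|[]].
have -> : ghead T id w' = (gt t w', atau tau w') by case: w' => [[]|[]].
rewrite /phi_rel /sflip /=; split.
  by case=> /maxpermP ? /maxantiP ? -> ->.
by case=> /maxpermP ? /maxantiP ? [-> ->].
Qed.

Lemma psi_relP w w' : psi_rel s t R sg tau w w' <->
  [/\ gmaximal S T id w, gmaximal nS T sflip w' & gtail nS sflip w' = gtail S id w].
Proof.
have -> : gtail S id w = (gs s w, asg sg w) by case: w => [[]|[]].
have -> : gtail nS sflip w' = (gs s w', ~~ psg sg w') by case: w' => [[]|[]].
rewrite /psi_rel; split.
  by case=> /maxantiP ? /maxpermP ? -> ->; rewrite negbK.
by case=> /maxantiP ? /maxpermP ? [-> psg_w']; rewrite -psg_w' negbK.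
Qed.

Local Notation Phi := (Phi_rel s t R sg tau).

Lemma Phi_rel_fun w z1 z2 : Phi w z1 -> Phi w z2 -> z1 = z2.
Proof.
move=> [o1 [/psi_relP [_ Mo1 tl1] /phi_relP [_ Nz1 hd1]]].
move=> [o2 [/psi_relP [_ Mo2 tl2] /phi_relP [_ Nz2 hd2]]].
have o12 : o1 = o2.
  by apply: (gmaximal_eq_tail negport_s_inj sflip_inj Mo1 Mo2); rewrite tl1 tl2.
by subst o2; apply: (gmaximal_eq_head port_t_inj (@inj_id _) Nz1 Nz2); rewrite hd1 hd2.
Qed.

Lemma Phi_rel_inj w1 w2 z : Phi w1 z -> Phi w2 z -> w1 = w2.
Proof.
move=> [o1 [/psi_relP [Nw1 Mo1 tl1] /phi_relP [_ _ hd1]]].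
move=> [o2 [/psi_relP [Nw2 Mo2 tl2] /phi_relP [_ _ hd2]]].
have o12 : o1 = o2.
  by apply: (gmaximal_eq_head port_t_inj sflip_inj Mo1 Mo2); apply: sflip_inj; rewrite -hd1 -hd2.
by subst o2; apply: (gmaximal_eq_tail port_s_inj (@inj_id _) Nw1 Nw2); rewrite -tl1 -tl2.
Qed.

Lemma Phi_rel_dom w z : Phi w z -> gmaximal S T id w /\ gmaximal S T id z.
Proof. by move=> [o [/psi_relP [? _ _] /phi_relP [_ ? _]]]. Qed.

Lemma Phi_rel_total w : gmaximal S T id w -> exists z, Phi w z.
Proof.
move=> Nw; have [_ _ tl_free] := Nw.
have [o [Mo tlo]] := gmaximal_exists_tail nS port_t_inj sflipK tl_free.
have [_ hd_free _] := Mo.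
have hd_free' c : S c != sflip (ghead T sflip o).
  by apply: contraNneq (hd_free c) => Sc; rewrite /negport Sc sflipK.
have [z [Nz hdz]] := @gmaximal_exists_head _ _ S T id port_s_inj id (fun _ => erefl) _ hd_free'.
by exists z, o; split; [apply/psi_relP | apply/phi_relP].
Qed.

Local Notation Psi := (Psi_rel s t R sg tau).

Lemma Psi_rel_fun x y1 y2 : Psi x y1 -> Psi x y2 -> y1 = y2.
Proof. by move=> /Psi_relP [_ _ T1] /Psi_relP [_ _ T2]; apply: port_t_inj; rewrite T1 T2. Qed.

Lemma Psi_rel_inj x1 x2 y : Psi x1 y -> Psi x2 y -> x1 = x2.
Proof. by move=> /Psi_relP [_ _ T1] /Psi_relP [_ _ T2]; apply: port_s_inj; rewrite -T1 -T2. Qed.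

Lemma permitted_chains_bounded :
  (exists n, 0 < n /\ forall p, size p = n -> is_path s t p -> has_rel R p) <->
  exists n, forall l, sorted (link nS T) l -> size l < n.
Proof.
split=> [[n [n_gt0 acyc]]|[n bound]].
  exists n => -[|a q] //= aq; rewrite ltnNge; apply/negP => size_q.
  have size_take : size (a :: take n.-1 q) = n.
    by rewrite /= size_take_min (minn_idPl _) ?prednK // -ltnS prednK.
  have := acyc _ size_take; have := permitted_glinked (inr (a, take n.-1 q)).
  by rewrite /= (take_path _ aq) => /andP[-> /negP no_rel] /(_ erefl).
exists n; split=> [|[//|a q] size_aq is_path_aq]; first exact: (bound [::] isT).
apply: contraT => no_rel.
have := permitted_glinked (inr (a, q)); rewrite /= is_path_aq no_rel => /esym aq.
by have := bound (a :: q) aq; rewrite size_aq ltnn.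
Qed.

Lemma gentle_of_sign_ok : qconnected s t ->
  (exists n, 0 < n /\ forall p, size p = n -> is_path s t p -> has_rel R p) ->
  gentle s t R.
Proof.
have [sg_opp tau_opp _] := so.
move=> conn acyc; split => // [x|a|a]; split.
- apply: (card_sign_le2 (e := sg)) => a b ab /eqP sa /eqP sb.
  by apply: sg_opp ab _; rewrite sa sb.
- apply: (card_sign_le2 (e := tau)) => a b ab /eqP ta /eqP tb.
  by apply: tau_opp ab _; rewrite ta tb.
- by apply: (card_fiber_le1 negport_s_inj) => b; rewrite /= free_negport.
- by apply: (card_fiber_le1 port_t_inj) => c; rewrite /= eq_sym free_negport eq_sym.
- by apply: (card_fiber_le1 port_s_inj) => b; rewrite /= R_port.
- by apply: (card_fiber_le1 port_t_inj) => c; rewrite /= R_port eq_sym.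
Qed.

End Signs.

(** * Orbits of partial bijections *)

Section Orbits.
Variables (T : Type) (F : T -> T -> Prop).

Lemma iter_rel_add n m x z :
  iter_rel F (n + m) x z <-> exists y, iter_rel F n x y /\ iter_rel F m y z.
Proof.
elim: n x => [|n IH] x /=; first by split; [exists x | case=> y [->]].
split; first by case=> y [Fxy /IH [w [? ?]]]; exists w; split => //; exists y.
by case=> w [[y [Fxy ?]] ?]; exists y; split => //; apply/IH; exists w.
Qed.

Lemma zorbit_refl x : zorbit F x x.
Proof. by exists 0; left. Qed.

Lemma zorbit_sym x y : zorbit F x y -> zorbit F y x.
Proof. by move=> [n [?|?]]; exists n; [right | left]. Qed.

Lemma zorbit_closed (P : T -> Prop) x y :
  (forall u v, F u v -> P u <-> P v) -> P x -> zorbit F x y -> P y.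
Proof.
move=> PF Px [n [Hn|Hn]]; elim: n x y Hn Px => [|n IH] x y /=.
- by move=> ->.
- by move=> [z [Fxz Hz]] Px; apply: IH Hz _; apply/(PF _ _ Fxz).
- by move=> ->.
- by move=> [z [Fyz Hz]] Px; apply/(PF _ _ Fyz); apply: IH Hz Px.
Qed.

Lemma zorbit_neq_set1 x : zorbit F x <> [set x] -> exists2 y, zorbit F x y & y <> x.
Proof.
move=> orb_x; apply: contrapT => no_y; apply: orb_x; apply/seteqP; split=> [y xy|_ ->].
  by apply: contrapT => yx; apply: no_y; exists y.
exact: zorbit_refl.
Qed.

Hypothesis F_fun : forall x y1 y2, F x y1 -> F x y2 -> y1 = y2.
Hypothesis F_inj : forall x1 x2 y, F x1 y -> F x2 y -> x1 = x2.

Lemma iter_rel_fun n x y1 y2 : iter_rel F n x y1 -> iter_rel F n x y2 -> y1 = y2.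
Proof.
elim: n x => [|n IH] x /=; first by move=> <- <-.
by move=> [z1 [F1 H1]] [z2 [F2 H2]]; move: H1; rewrite (F_fun F1 F2) => /IH; apply.
Qed.

Lemma iter_rel_inj n x1 x2 y : iter_rel F n x1 y -> iter_rel F n x2 y -> x1 = x2.
Proof.
elim: n x1 x2 => [|n IH] x1 x2 /=; first by move=> -> ->.
move=> [z1 [F1 H1]] [z2 [F2 H2]]; move: F1; rewrite (IH _ _ H1 H2) => F1; exact: F_inj F1 F2.
Qed.

Lemma zorbit_trans x y z : zorbit F x y -> zorbit F y z -> zorbit F x z.
Proof.
move=> [n [H1|H1]] [m [H2|H2]].
- by exists (n + m); left; apply/iter_rel_add; exists y.
- case: (leqP n m) => nm.
    move: H2; rewrite -(subnK nm) => /iter_rel_add [w [Hw1 Hw2]].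
    by rewrite (iter_rel_inj Hw2 H1) in Hw1; exists (m - n); right.
  move: H1; rewrite -(subnK (ltnW nm)) => /iter_rel_add [w [Hw1 Hw2]].
  by rewrite (iter_rel_inj Hw2 H2) in Hw1; exists (n - m); left.
- case: (leqP n m) => nm.
    move: H2; rewrite -(subnK nm) addnC => /iter_rel_add [w [Hw1 Hw2]].
    by rewrite (iter_rel_fun Hw1 H1) in Hw2; exists (m - n); left.
  move: H1; rewrite -(subnK (ltnW nm)) addnC => /iter_rel_add [w [Hw1 Hw2]].
  by rewrite (iter_rel_fun Hw1 H2) in Hw2; exists (n - m); right.
- by exists (m + n); right; apply/iter_rel_add; exists y.
Qed.

Lemma zorbit_eq x y : zorbit F x y -> zorbit F y = zorbit F x.
Proof.
move=> xy; apply/seteqP; split => z.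
  exact: zorbit_trans xy.
exact: zorbit_trans (zorbit_sym xy).
Qed.

Lemma zorbit_setD1_other x r : zorbit F x <> zorbit F r -> zorbit F x `\ r = zorbit F x.
Proof.
move=> xr; apply/seteqP; split=> [y [] //|y xy]; split => // yr; apply: xr.
by rewrite -yr (zorbit_eq xy).
Qed.

Lemma zorbit_set1P x : (exists y, F x y) -> zorbit F x = [set x] <-> F x x.
Proof.
move=> [y Fxy]; split=> [orb_x|Fxx].
  have : zorbit F x y by exists 1; left; exists y.
  by rewrite orb_x => yx; rewrite -{2}yx.
have iter_x n : iter_rel F n x x by elim: n => //= n IH; exists x.
apply/seteqP; split=> [z [n [Hz|Hz]]|z ->]; last exact: zorbit_refl.
  exact: iter_rel_fun Hz (iter_x n).
exact: iter_rel_inj Hz (iter_x n).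
Qed.

End Orbits.

Section SkipOrbit.
Variables (T T' : Type) (e : T -> T') (F : T -> T -> Prop) (F' : T' -> T' -> Prop).
Variables (X : set T) (r r2 : T).

(* F with the point r cut out of its cycle. *)
Definition skip_rel u v := (F u v /\ v <> r) \/ (F u r /\ v = r2).

Hypothesis e_inj : injective e.
Hypothesis F_fun : forall x y1 y2, F x y1 -> F x y2 -> y1 = y2.
Hypothesis F_dom : forall x y, F x y -> X x /\ X y.
Hypothesis F_r : F r r2.
Hypothesis r2_neq : r2 <> r.
Hypothesis F'_skip : forall u, X u -> u <> r ->
  forall y, F' (e u) y <-> exists v, y = e v /\ skip_rel u v.
Hypothesis F'_dom : forall y y', F' y y' -> exists u, [/\ X u, u <> r & y = e u].

Lemma skip_relP u v : skip_rel u v -> [/\ X v, v <> r & exists k, iter_rel F k u v].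
Proof.
case=> [[Fuv vr]|[Fur ->]].
  by split => //; [exact: (F_dom Fuv).2 | exists 1; exists v].
split => //; first exact: (F_dom F_r).2.
by exists 2, r; split => //; exists r2.
Qed.

Lemma iter_skip_of_iter n u y : X u -> u <> r -> y <> r -> iter_rel F n u y ->
  exists m, iter_rel F' m (e u) (e y).
Proof.
elim: n {-2}n (leqnn n) u => [|N IH] n Hn u Xu ur yr.
  by move: Hn; rewrite leqn0 => /eqP -> /= ->; exists 0.
case: n Hn => [|n] Hn /=; first by move=> ->; exists 0.
move=> [u1 [Fuu1 H1]].
have [u1r|u1r] := pselect (u1 = r).
  subst u1; case: n Hn H1 => [|n] Hn /=; first by move=> yr'; case: yr.
  move=> [u2 [Fru2 H2]]; rewrite (F_fun Fru2 F_r) in H2.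
  have [m Hm] := IH n (ltnW Hn) r2 (F_dom F_r).2 r2_neq yr H2.
  by exists m.+1, (e r2); split => //; apply/(F'_skip Xu ur); exists r2; split => //; right.
have [m Hm] := IH n Hn u1 (F_dom Fuu1).2 u1r yr H1.
by exists m.+1, (e u1); split => //; apply/(F'_skip Xu ur); exists u1; split => //; left.
Qed.

Lemma iter_of_iter_skip m u z : X u -> u <> r -> iter_rel F' m (e u) z ->
  exists v, [/\ z = e v, X v, v <> r & exists k, iter_rel F k u v].
Proof.
elim: m u => [|m IH] u Xu ur /=; first by move=> <-; exists u; split => //; exists 0.
move=> [y [/(F'_skip Xu ur) [v [-> uv]] Hm]].
have [Xv vr [k Hk]] := skip_relP uv.
have [w [-> Xw wr [k' Hk']]] := IH v Xv vr Hm.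
by exists w; split => //; exists (k + k'); apply/iter_rel_add; exists v.
Qed.

Lemma zorbit_skip x : X x -> x <> r -> zorbit F' (e x) = e @` (zorbit F x `\ r).
Proof.
move=> Xx xr; apply/seteqP; split => z.
  move=> [m [H|H]].
    have [v [-> Xv vr [k Hk]]] := iter_of_iter_skip Xx xr H.
    by exists v => //; split => //; exists k; left.
  case: m H => [|m] /= H; first by rewrite H; exists x => //; split => //; exact: zorbit_refl.
  case: H => [y [Fzy H]]; have [u [Xu ur Ez]] := F'_dom Fzy; subst z.
  have [v [/e_inj Ev Xv vr [k Hk]]] := iter_of_iter_skip (m := m.+1) Xu ur (ex_intro _ y (conj Fzy H)).
  by subst v; exists u => //; split => //; exists k; right.
move=> [v [[n [H|H]] vr] <-].
  by have [m Hm] := iter_skip_of_iter Xx xr vr H; exists m; left.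
have Xv : X v.
  by case: n H => [|n] /= H; [rewrite H | case: H => y [/F_dom []]].
by have [m Hm] := iter_skip_of_iter Xv vr xr H; exists m; right.
Qed.

End SkipOrbit.

Section LiftOrbit.
Variables (T T' : Type) (e : T -> T') (F : T -> T -> Prop) (F' : T' -> T' -> Prop).
Variable X : set T.
Hypothesis F_dom : forall x y, F x y -> X x /\ X y.
Hypothesis F'_succ : forall u, X u -> forall y, F' (e u) y <-> exists v, y = e v /\ F u v.
Hypothesis F'_pred : forall u y, X u -> F' y (e u) -> exists v, y = e v /\ F v u.

Lemma iter_lift n u v : X u -> iter_rel F n u v -> iter_rel F' n (e u) (e v).
Proof.
elim: n u => [|n IH] u Xu /=; first by move=> ->.
move=> [w [Fuw H]]; exists (e w); split; last exact: IH (F_dom Fuw).2 H.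
by apply/(F'_succ Xu); exists w.
Qed.

Lemma iter_lift_succ n u z : X u -> iter_rel F' n (e u) z ->
  exists v, z = e v /\ iter_rel F n u v.
Proof.
elim: n u => [|n IH] u Xu /=; first by move=> <-; exists u.
move=> [y [/(F'_succ Xu) [v [-> Fuv]] H]].
have [w [-> Hw]] := IH v (F_dom Fuv).2 H.
by exists w; split => //; exists v.
Qed.

Lemma iter_rel_dom n u v : X v -> iter_rel F n u v -> X u.
Proof. by case: n => [|n] Xv /= => [-> | [w [/F_dom []]]]. Qed.

Lemma iter_lift_pred n u z : X u -> iter_rel F' n z (e u) ->
  exists v, z = e v /\ iter_rel F n v u.
Proof.
elim: n u z => [|n IH] u z Xu /=; first by move=> ->; exists u.
move=> [y [Fzy H]]; have [v [Ev Hv]] := IH u y Xu H; subst y.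
have [w [-> Fwv]] := F'_pred (iter_rel_dom Xu Hv) Fzy.
by exists w; split => //; exists v.
Qed.

Lemma zorbit_lift x : X x -> zorbit F' (e x) = e @` zorbit F x.
Proof.
move=> Xx; apply/seteqP; split => z.
  move=> [m [H|H]].
    by have [v [-> Hv]] := iter_lift_succ Xx H; exists v => //; exists m; left.
  by have [v [-> Hv]] := iter_lift_pred Xx H; exists v => //; exists m; right.
move=> [v [n [H|H]] <-]; exists n; first by left; exact: iter_lift.
by right; apply: iter_lift (iter_rel_dom Xx H) H.
Qed.

End LiftOrbit.

(** * The completion *)

Lemma map_Some_pmap (X : Type) (l : seq (option X)) :
  all isSome l -> l = map Some (pmap id l).
Proof. by elim: l => //= -[x|] l IH //= /IH <-. Qed.

Lemma mem_split_first (X : eqType) (x : X) l : x \in l ->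
  exists l1 l2, l = l1 ++ x :: l2 /\ x \notin l1.
Proof.
elim: l => //= a l IH; rewrite inE; have [<- _|xa /= /IH] := eqVneq x a.
  by exists [::], l.
by move=> [l1 [l2 [-> x_l1]]]; exists (a :: l1), l2; rewrite inE negb_or xa.
Qed.

Lemma cycle_unbounded (X : Type) (e : rel X) x c n :
  cycle e (x :: c) -> exists2 l, sorted e l & n <= size l.
Proof.
move=> cyc; have {}cyc : path e (last x c) (x :: c) by rewrite (cycle_path x) in cyc.
have flattenS m : flatten (nseq m.+1 (x :: c)) = (x :: c) ++ flatten (nseq m (x :: c)).
  by [].
exists (flatten (nseq n (x :: c))).
  apply: (@path_sorted _ _ (last x c)); elim: n => // n IH.
  by rewrite flattenS cat_path cyc IH.
elim: n => // n IH; rewrite flattenS size_cat /= addSn ltnS.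
exact: leq_trans IH (leq_addl _ _).
Qed.

Section Embedding.
Variables (V A : finType).
Implicit Types (g : gpath V A).

Lemma arrows_emb g : arrows (emb g) = map Some (arrows g).
Proof. by case: g => [[x e]|[a p]]. Qed.

Lemma emb_inj : injective (@emb V A).
Proof.
case=> [[x e]|[a p]] [[y f]|[b q]] //=; first by case=> -> ->.
by case=> -> /(inj_map (@Some_inj _)) ->.
Qed.

Lemma gpath_emb (g' : gpath V (option A)) : None \notin arrows g' -> exists g, g' = emb g.
Proof.
case: g' => [xe|[[a|] p]] //= Hp; first by exists (inl xe).
exists (inr (a, pmap id p)); rewrite /= -map_Some_pmap //.
by apply/allP => -[//|]; move: Hp; rewrite inE negb_or => /andP[_ /negP].
Qed.

Variables (K T : A -> V * bool) (K' T' : option A -> V * bool) (tr : V * bool -> V * bool).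
Hypotheses (K'_Some : forall a, K' (Some a) = K a) (T'_Some : forall a, T' (Some a) = T a).

Lemma ghead_emb g : ghead T' tr (emb g) = ghead T tr g.
Proof. by case: g => [[x e]|[a p]] //=. Qed.

Lemma gtail_emb g : gtail K' tr (emb g) = gtail K tr g.
Proof. by case: g => [[x e]|[a p]] //=; rewrite last_map. Qed.

Lemma glinked_emb g : glinked K' T' (emb g) = glinked K T g.
Proof.
case: g => [[x e]|[a p]] //=; rewrite path_map; apply: eq_path => x y.
by rewrite /link /= K'_Some T'_Some.
Qed.

Lemma gmaximal_emb g : gmaximal K' T' tr (emb g) <->
  [/\ gmaximal K T tr g, K' None != ghead T tr g & T' None != gtail K tr g].
Proof.
rewrite /gmaximal glinked_emb ghead_emb gtail_emb; split.
  by case=> ? Hh Ht; split => //; split => // c; [rewrite -K'_Some | rewrite -T'_Some].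
by case=> [[? Hh Ht] ? ?]; split => // -[c|] //; rewrite ?K'_Some ?T'_Some.
Qed.

End Embedding.

Section Completion.
Variables (V A : finType) (s t : A -> V) (R : rel A) (sg tau : A -> bool) (al be : A).
Hypotheses (gentle_R : gentle s t R) (so : sign_ok s t R sg tau).
Hypothesis iso : isolated s t R sg tau al be.

Local Notation s' := (cs s t al).
Local Notation t' := (ct s t be).
Local Notation R' := (cR R al be).
Local Notation sg' := (csg sg tau al).
Local Notation tau' := (ctau sg tau be).
Local Notation rho := (inr (al, [:: be]) : gpath V A).
Local Notation S := (port s sg).
Local Notation T := (port t tau).
Local Notation nS := (negport s sg).
Local Notation S' := (port s' sg').
Local Notation T' := (port t' tau').
Local Notation nS' := (negport s' sg').
Local Notation N := (gmaximal S T id).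
Local Notation M := (gmaximal nS T sflip).
Local Notation N' := (gmaximal S' T' id).
Local Notation M' := (gmaximal nS' T' sflip).
Local Notation C := (Cset s t R sg tau).
Local Notation C' := (Cset s' t' R' sg' tau').
Local Notation Phi := (Phi_rel s t R sg tau).
Local Notation Phi' := (Phi_rel s' t' R' sg' tau').
Local Notation Psi := (Psi_rel s t R sg tau).
Local Notation Psi' := (Psi_rel s' t' R' sg' tau').

Lemma R_st x y : R x y -> s x = t y.
Proof. by case: gentle_R => [[_ R_compat] _ _ _ _]; apply: R_compat. Qed.

Lemma rho_N : N rho.
Proof. by case/andP: iso => _ /(maxantiP so R_st). Qed.

Lemma rho_head_free c : S c != T al.
Proof. by case: rho_N => _ /(_ c). Qed.

Lemma rho_tail_free c : T c != S be.
Proof. by case: rho_N => _ _ /(_ c). Qed.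

Lemma S_al : S al = T be.
Proof. by apply/eqP; rewrite -(R_port so R_st); case/andP: iso. Qed.

Lemma N_head_rho w : N w -> ghead T id w = T al -> w = rho.
Proof. by move=> Nw hd; apply: (gmaximal_eq_head (port_t_inj so) (@inj_id _) Nw rho_N). Qed.

Lemma N_tail_rho w : N w -> gtail S id w = S be -> w = rho.
Proof. by move=> Nw tl; apply: (gmaximal_eq_tail (port_s_inj so) (@inj_id _) Nw rho_N). Qed.

Lemma sign_ok_completion : sign_ok s' t' R' sg' tau'.
Proof.
have [sg_opp tau_opp R_sign] := so; split.
- move=> [a|] [b|] //= ab.
  + by apply: sg_opp; apply: contraNneq ab => ->.
  + exact: (sign_opp (rho_head_free a)).
  + by move/esym/(sign_opp (rho_head_free b)) => /= ->; rewrite negbK.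
- move=> [a|] [b|] //= ab.
  + by apply: tau_opp; apply: contraNneq ab => ->.
  + exact: (sign_opp (rho_tail_free a)).
  + by move/esym/(sign_opp (rho_tail_free b)) => /= ->; rewrite negbK.
- move=> [a|] [b|] //= sab.
  + exact: R_sign.
  + have [->|abe] := eqVneq a be; first by rewrite !eqxx.
    by rewrite (sg_opp a be abe sab); case: (sg be).
  + have [->|bal] := eqVneq b al; first by rewrite !eqxx.
    by rewrite (tau_opp b al bal (esym sab)); case: (tau al).
  + by move: (sign_opp (rho_tail_free al) sab) => /= ->; case: (sg be).
Qed.

Lemma R'_st x y : R' x y -> s' x = t' y.
Proof. by case: x y => [a|] [b|] //= => [/R_st | /eqP -> | /eqP ->]. Qed.

Local Notation gamma := [:: None; Some al; Some be].

Lemma gamma_cycle : cycle (link S' T') gamma.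
Proof. by rewrite /= /link /=; apply/and4P; split=> //; apply/eqP; exact: S_al. Qed.

Lemma N'_emb w : N' (emb w) <-> N w /\ w <> rho.
Proof.
rewrite (gmaximal_emb _ (K := S) (T := T)) //; split=> [[Nw hd tl] | [Nw w_rho]].
  by split => // w_rho; move: hd; rewrite w_rho eqxx.
by split => //; apply: contra_not_neq w_rho => E; [apply: N_head_rho | apply: N_tail_rho].
Qed.

Lemma N'P w' : N' w' <-> exists2 w, N w /\ w <> rho & w' = emb w.
Proof.
split=> [Nw' | [w Nw ->]]; last exact/N'_emb.
have gamma_w' : None \notin arrows w'.
  exact: (gmaximal_cycle_notin (port_t_inj sign_ok_completion) gamma_cycle Nw' (mem_head _ _)).
by have [w Ew] := gpath_emb gamma_w'; subst w'; exists w; first exact/N'_emb.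
Qed.

Lemma maxanti_completionP w' : maxanti s' t' R' sg' tau' w' <-> N' w'.
Proof. exact: maxantiP sign_ok_completion R'_st w'. Qed.

Lemma Nset_completion : Nset s' t' R' sg' tau' = emb @` (Nset s t R sg tau `\ rho).
Proof.
apply/seteqP; split => [w' /maxanti_completionP /N'P [w [Nw w_rho] ->]|_ [w [Nw w_rho] <-]].
  by exists w => //; split => //; apply/(maxantiP so R_st).
by apply/maxanti_completionP/N'_emb; split => //; apply/(maxantiP so R_st).
Qed.

Lemma CP c : C c <-> ~ exists w, N w /\ c \in arrows w.
Proof.
by rewrite /Cset /=; split=> Cc [w [Nw cw]]; apply: Cc; exists w; split => //; apply/(maxantiP so R_st).
Qed.

Lemma C'P x : C' x <-> ~ exists w, [/\ N w, w <> rho & x \in map Some (arrows w)].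
Proof.
rewrite /Cset /=; split=> Cx.
  by move=> [w [Nw w_rho xw]]; apply: Cx; exists (emb w); rewrite arrows_emb;
    split => //; apply/maxanti_completionP/N'_emb.
move=> [w' [/maxanti_completionP /N'P [w [Nw w_rho] ->]]]; rewrite arrows_emb => xw.
by apply: Cx; exists w.
Qed.

Lemma N_al_rho w : N w -> al \in arrows w -> w = rho.
Proof.
case: w => [//|[a p]] Nw /= al_w; have [linked _ _] := Nw.
have [al_a|[u _ Su]] := link_path_pred linked al_w.
  by subst a; apply: N_head_rho.
by move: (rho_head_free u); rewrite Su eqxx.
Qed.

Lemma N_be_rho w : N w -> be \in arrows w -> w = rho.
Proof.
case: w => [//|[a p]] Nw /= be_w; have [linked _ _] := Nw.
have [be_last|[u _ Su]] := link_path_succ linked be_w.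
  by apply: N_tail_rho => //; rewrite /= -be_last.
by move: (rho_tail_free u); rewrite Su eqxx.
Qed.

Lemma Cset_completion : C' = Some @` C `|` [set Some al; Some be; None].
Proof.
apply/seteqP; split=> [x C'x|x].
  case: x C'x => [c /C'P C'x|_]; last by right; right.
  have [->|c_al] := eqVneq c al; first by right; left; left.
  have [->|c_be] := eqVneq c be; first by right; left; right.
  left; exists c => //; apply/CP => -[w [Nw cw]]; apply: C'x; exists w.
  split; rewrite ?mem_map //; last exact: Some_inj.
  by move=> w_rho; move: cw; rewrite w_rho !inE (negbTE c_al) (negbTE c_be).
rewrite /setU /set1 /=; case=> [[c /CP Cc <-]|x_gamma]; apply/C'P => -[w [Nw w_rho]].
  by rewrite mem_map; [move=> cw; apply: Cc; exists w | exact: Some_inj].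
case: x_gamma => [[->|->]|->]; rewrite ?mem_map; try exact: Some_inj.
- by move/(N_al_rho Nw).
- by move/(N_be_rho Nw).
- by case/mapP.
Qed.

Lemma rho_notin_C c : c \in arrows rho -> ~ C c.
Proof. by move=> c_rho /CP; apply; exists rho; split => //; exact: rho_N. Qed.

Lemma C_succ_closed u v : C u -> T v = S u -> C v.
Proof.
move=> /CP Cu Tv; apply/CP => -[[xe|[a p]] [Nw /= vw]] //; have [linked hd_free _] := Nw.
have [va|[x xw Sx]] := link_path_pred linked vw.
  by subst v; move: (hd_free u); rewrite /= Tv eqxx.
have xu : x = u by apply: (port_s_inj so); rewrite Sx Tv.
by subst x; apply: Cu; exists (inr (a, p)).
Qed.

Lemma C_pred_closed u v : C u -> T u = S v -> C v.
Proof.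
move=> /CP Cu Tu; apply/CP => -[[xe|[a p]] [Nw /= vw]] //; have [linked _ tl_free] := Nw.
have [v_last|[x xw Sx]] := link_path_succ linked vw.
  by move: (tl_free u); rewrite /= -v_last Tu eqxx.
have xu : x = u by apply: (port_t_inj so); rewrite -Sx Tu.
by subst x; apply: Cu; exists (inr (a, p)).
Qed.

Lemma C'_Some c : C c -> C' (Some c).
Proof. by move=> Cc; rewrite Cset_completion; left; exists c. Qed.

Lemma C'_gamma x : x \in gamma -> C' x.
Proof.
by rewrite Cset_completion !inE => /or3P[] /eqP ->; right; [right | left; left | left; right].
Qed.

Lemma zorbit_Psi'_Some c : C c -> zorbit Psi' (Some c) = Some @` zorbit Psi c.
Proof.
move=> Cc; apply: (zorbit_lift (X := C)) => //.
- by move=> x y /Psi_relP [].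
- move=> u Cu y; split => [/Psi_relP [_ C'y Ty] | [v [-> /Psi_relP [_ Cv Tv]]]].
    case: y C'y Ty => [v|] C'y Tv.
      by exists v; split => //; apply/Psi_relP; split => //; exact: C_succ_closed Cu Tv.
    have u_be : u = be by apply: (port_s_inj so); exact: (esym Tv).
    by subst u; case: (rho_notin_C (c := be)) => //; rewrite !inE eqxx orbT.
  by apply/Psi_relP; split => //; exact: C'_Some.
- move=> u y Cu /Psi_relP [C'y _ Tu].
  case: y C'y Tu => [v|] C'y Tu.
    by exists v; split => //; apply/Psi_relP; split => //; exact: C_pred_closed Cu Tu.
  have u_al : u = al by apply: (port_t_inj so).
  by subst u; case: (rho_notin_C (c := al)) => //; rewrite !inE eqxx.
Qed.

Lemma zorbit_Psi'_gamma : zorbit Psi' None = [set Some al; Some be; None].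
Proof.
have [Tinj' Sinj'] := (port_t_inj sign_ok_completion, port_s_inj sign_ok_completion).
apply/seteqP; split=> [y|y].
  have gamma_closed u v : Psi' u v -> u \in gamma <-> v \in gamma.
    move=> /Psi_relP [_ _ Tv]; have uv : link S' T' u v by rewrite /link Tv.
    split=> [u_gamma | v_gamma].
      exact (link_cycle_succ_closed Tinj' gamma_cycle u_gamma uv).
    exact (link_cycle_pred_closed Sinj' gamma_cycle v_gamma uv).
  by move=> /(zorbit_closed gamma_closed (mem_head _ _)); rewrite !inE => /or3P[] /eqP ->;
    [right | left; left | left; right].
rewrite /setU /set1 /=; case=> [[->|->]|->]; last exact: zorbit_refl.
- exists 1; left; exists (Some al); split => //; apply/Psi_relP.
  by split => //; apply: C'_gamma; rewrite !inE eqxx ?orbT.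
- exists 1; right; exists None; split => //; apply/Psi_relP.
  by split => //; apply: C'_gamma; rewrite !inE eqxx ?orbT.
Qed.

Lemma Psi_orbits_completion : orbits Psi' C' =
  [set (image O Some) | O in orbits Psi C] `|` [set [set Some al; Some be; None]].
Proof.
have Psi'_fun := Psi_rel_fun sign_ok_completion.
have Psi'_inj := Psi_rel_inj sign_ok_completion.
apply/seteqP; split=> [_ [x [C'x ->]]|O'].
  move: C'x; rewrite Cset_completion => -[[c Cc <-]|x_gamma].
    by left; exists (zorbit Psi c); [exists c | rewrite zorbit_Psi'_Some].
  right; rewrite /set1 /= -zorbit_Psi'_gamma; apply: (zorbit_eq Psi'_fun Psi'_inj).
  by rewrite zorbit_Psi'_gamma.
case=> [[_ [c [Cc ->]] <-]|->].
  by exists (Some c); split; [exact: C'_Some | rewrite zorbit_Psi'_Some].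
by exists None; split; [apply: C'_gamma; rewrite mem_head | rewrite zorbit_Psi'_gamma].
Qed.

Lemma ghead_emb_T tr g : ghead T' tr (emb g) = ghead T tr g.
Proof. exact: ghead_emb. Qed.

Lemma gtail_emb_S g : gtail S' id (emb g) = gtail S id g.
Proof. exact: gtail_emb. Qed.

Lemma gtail_emb_nS g : gtail nS' sflip (emb g) = gtail nS sflip g.
Proof. exact: gtail_emb. Qed.

Lemma glinked_emb_nS g : glinked nS' T' (emb g) = glinked nS T g.
Proof. exact: glinked_emb. Qed.

Lemma M'_emb g : M' (emb g) <->
  [/\ M g, nS' None != ghead T sflip g & T' None != gtail nS sflip g].
Proof. exact: (gmaximal_emb (K := nS) (T := T)). Qed.

Lemma Phi'_emb u v : N u -> u <> rho -> Phi u v -> v <> rho -> Phi' (emb u) (emb v).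
Proof.
move=> Nu u_rho [o [/(psi_relP so R_st) [_ Mo tlo] /(phi_relP so R_st) [_ Nv hdv]]] v_rho.
have M'o : M' (emb o).
  apply/M'_emb; split => //.
    by apply: contra_not_neq v_rho => E; apply: N_head_rho => //; rewrite hdv -E /negport sflipK.
  by apply: contra_not_neq u_rho => E; apply: N_tail_rho => //; rewrite -tlo -E.
exists (emb o); split.
  apply/(psi_relP sign_ok_completion R'_st).
  by rewrite gtail_emb_S gtail_emb_nS; split => //; apply/N'_emb.
apply/(phi_relP sign_ok_completion R'_st).
by rewrite !ghead_emb_T; split => //; apply/N'_emb.
Qed.

Lemma Phi'_emb_skip u r2 : N u -> u <> rho -> Phi u rho -> Phi rho r2 -> r2 <> rho ->
  Phi' (emb u) (emb r2).
Proof.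
move=> Nu u_rho [o [/(psi_relP so R_st) [_ Mo tlo] /(phi_relP so R_st) [_ _ hdo]]].
move=> [o2 [/(psi_relP so R_st) [_ Mo2 tlo2] /(phi_relP so R_st) [_ Nr2 hdr2]]] r2_rho.
have [linked_o _ tl_o] := Mo; have [linked_o2 hd_o2 _] := Mo2.
pose gam : gpath V (option A) := inr (None, [::]).
have [linked_o2g hd_o2g tl_o2g _] := @gcat_spec _ _ nS' T' sflip (emb o2) gam
  (etrans (glinked_emb_nS o2) linked_o2) isT (etrans (gtail_emb_nS o2) tlo2).
have o2g_o : gtail nS' sflip (gcat (emb o2) gam) = ghead T' sflip (emb o).
  by rewrite tl_o2g ghead_emb_T; apply: sflip_inj; rewrite -hdo sflipK.
have [linked_mu hd_mu tl_mu _] := gcat_spec linked_o2g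
  (etrans (glinked_emb_nS o) linked_o) o2g_o.
set mu := gcat _ (emb o) in linked_mu hd_mu tl_mu.
have M'mu : M' mu.
  split => // -[c|].
  - by rewrite hd_mu hd_o2g ghead_emb_T; exact: hd_o2.
  - rewrite hd_mu hd_o2g ghead_emb_T; apply: contra_not_neq r2_rho => E.
    by apply: N_head_rho => //; rewrite hdr2 -E /negport sflipK.
  - by rewrite tl_mu gtail_emb_nS; exact: tl_o.
  - rewrite tl_mu gtail_emb_nS; apply: contra_not_neq u_rho => E.
    by apply: N_tail_rho => //; rewrite -tlo -E.
exists mu; split.
  apply/(psi_relP sign_ok_completion R'_st).
  by rewrite tl_mu gtail_emb_S gtail_emb_nS; split => //; apply/N'_emb.
apply/(phi_relP sign_ok_completion R'_st).
by rewrite hd_mu hd_o2g !ghead_emb_T; split => //; apply/N'_emb.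
Qed.

Lemma Phi'_skip_rel r2 : Phi rho r2 -> r2 <> rho -> forall u, N u -> u <> rho ->
  forall y, Phi' (emb u) y <-> exists v, y = emb v /\ skip_rel Phi rho r2 u v.
Proof.
move=> rho_r2 r2_rho u Nu u_rho y; split=> [Phi'uy | [v [-> [[uv v_rho] | [u_rho' ->]]]]].
- have [v uv] := Phi_rel_total so R_st Nu.
  have Phi'_fun := Phi_rel_fun sign_ok_completion R'_st.
  have [v_rho|v_rho] := pselect (v = rho).
    subst v; rewrite (Phi'_fun _ _ _ Phi'uy (Phi'_emb_skip Nu u_rho uv rho_r2 r2_rho)).
    by exists r2; split => //; right.
  rewrite (Phi'_fun _ _ _ Phi'uy (Phi'_emb Nu u_rho uv v_rho)).
  by exists v; split => //; left.
- exact: Phi'_emb.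
- exact: Phi'_emb_skip.
Qed.

Lemma zorbit_Phi'_emb r2 x : Phi rho r2 -> r2 <> rho -> N x -> x <> rho ->
  zorbit Phi' (emb x) = emb @` (zorbit Phi x `\ rho).
Proof.
move=> rho_r2 r2_rho Nx x_rho.
apply: (zorbit_skip (X := fun w => N w) (r2 := r2)) => //.
- exact: emb_inj.
- exact: Phi_rel_fun so R_st.
- exact: Phi_rel_dom so R_st.
- exact: Phi'_skip_rel rho_r2 r2_rho.
- by move=> y y' /(Phi_rel_dom sign_ok_completion R'_st) [/N'P [u [Nu u_rho] ->] _]; exists u.
Qed.

Lemma zorbit_Phi_N x y : zorbit Phi x y -> N x -> N y.
Proof.
move=> xy Nx; apply: zorbit_closed xy => // u v /(Phi_rel_dom so R_st) [Nu Nv].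
by split.
Qed.

Lemma Phi_orbits_completion : zorbit Phi rho <> [set rho] ->
  orbits Phi' (Nset s' t' R' sg' tau') =
  [set (image O emb) | O in [set O | orbits Phi (Nset s t R sg tau) O /\ O <> zorbit Phi rho]]
  `|` [set emb @` (zorbit Phi rho `\ rho)].
Proof.
move=> orb_rho; have [Phi_fun Phi_inj] := (Phi_rel_fun so R_st, Phi_rel_inj so R_st).
have [r2 rho_r2] := Phi_rel_total so R_st rho_N.
have r2_rho : r2 <> rho.
  move=> r2E; apply: orb_rho; apply/(zorbit_set1P Phi_fun Phi_inj (ex_intro _ _ rho_r2)).
  by rewrite -{2}r2E.
have orbit_emb := zorbit_Phi'_emb rho_r2 r2_rho.
apply/seteqP; split=> [_ [_ [/maxanti_completionP /N'P [x [Nx x_rho] ->] ->]] | O'].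
  rewrite (orbit_emb x Nx x_rho).
  have [x_orb|x_orb] := pselect (zorbit Phi x = zorbit Phi rho).
    by right; rewrite /set1 /= x_orb.
  left; exists (zorbit Phi x); last by rewrite zorbit_setD1_other.
  by split => //; exists x; split => //; apply/(maxantiP so R_st).
case=> [[_ [[x [/(maxantiP so R_st) Nx ->]] x_orb] <-]|->].
  have x_rho : x <> rho by move=> xE; apply: x_orb; rewrite xE.
  exists (emb x); split; first exact/maxanti_completionP/N'_emb.
  by rewrite orbit_emb // zorbit_setD1_other.
have [y rho_y y_rho] := zorbit_neq_set1 orb_rho.
have Ny := zorbit_Phi_N rho_y rho_N.
exists (emb y); split; first exact/maxanti_completionP/N'_emb.
by rewrite orbit_emb // (zorbit_eq Phi_fun Phi_inj rho_y).
Qed.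

Lemma Phi_rho_rhoP : Phi rho rho <->
  exists o, [/\ glinked nS T o, ghead T sflip o = sflip (T al) & gtail nS sflip o = S be].
Proof.
split=> [[o [/(psi_relP so R_st) [_ [linked _ _] tlo] /(phi_relP so R_st) [_ _ hdo]]] |
         [o [linked hdo tlo]]].
  by exists o; split => //; apply: sflip_inj; rewrite sflipK -hdo.
have Mo : M o.
  split => // c; rewrite ?hdo ?tlo; last exact: rho_tail_free.
  by apply: contra_neq (rho_head_free c) => /sflip_inj.
exists o; split; first by apply/(psi_relP so R_st); split => //; exact: rho_N.
by apply/(phi_relP so R_st); split => //; [exact: rho_N | rewrite hdo sflipK].
Qed.

Lemma gamma_loopP :
  (exists o, [/\ glinked nS T o, ghead T sflip o = sflip (T al) & gtail nS sflip o = S be]) <->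
  exists u, path (link nS' T') None (rcons (map Some u) None).
Proof.
split=> [[[xe|[a p]] [/= linked hdo tlo]] | [[|b u] /= loop]].
- by exists [::]; rewrite /= /link andbT; apply/eqP; rewrite /negport -hdo; exact: tlo.
- exists (a :: p); rewrite /= rcons_path last_map path_map; apply/and3P; split.
  + by apply/eqP; exact: esym hdo.
  + exact: sub_path linked.
  + by apply/eqP; exact: tlo.
- exists (inl (T al)); split => //.
  by apply/eqP; move: loop; rewrite /link andbT.
move: loop; rewrite rcons_path last_map path_map /link => /and3P[/eqP hd linked /eqP tl].
by exists (inr (b, u)); split; [exact: sub_path linked | exact: esym hd | exact: tl].
Qed.

(* A permitted chain meets gamma at most once, since the stretch between two
   consecutive occurrences would close a loop at rho. *)
Lemma completion_chains_bounded : ~ Phi rho rho ->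
  exists n, forall l, sorted (link nS' T') l -> size l < n.
Proof.
move=> no_loop; have [_ _ _ _ acyc] := gentle_R.
have [n bound] := (permitted_chains_bounded so R_st).1 acyc.
have bound' l : None \notin l -> sorted (link nS' T') l -> size l < n.
  move=> /negP gamma_l; have -> : l = map Some (pmap id l).
    by apply/map_Some_pmap/allP => -[//|] /gamma_l.
  by rewrite sorted_map size_map; apply: bound.
exists (n + n).+1 => l sorted_l; have [gamma_l|] := boolP (None \in l); last first.
  by move/bound'/(_ sorted_l)/leq_trans; apply; rewrite leqW ?leq_addr.
have [l1 [l2 [lE gamma_l1]]] := mem_split_first gamma_l; subst l.
move: sorted_l; rewrite sorted_cat_cons -cats1 => /andP[/cat_sorted2 [sorted_l1 _] path_l2].
have [gamma_l2|gamma_l2] := boolP (None \in l2); last first.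
  rewrite size_cat /= addnS ltnS -addSn leq_add ?(ltnW (bound' _ gamma_l2 _)) //.
    exact: bound' gamma_l1 sorted_l1.
  exact: path_sorted path_l2.
have [u [l3 [l2E gamma_u]]] := mem_split_first gamma_l2.
case: no_loop; apply/Phi_rho_rhoP/gamma_loopP; exists (pmap id u).
rewrite -map_Some_pmap; last by apply/allP => -[//|] gamma_u'; rewrite gamma_u' in gamma_u.
by move: path_l2; rewrite l2E -cat_rcons cat_path => /andP[].
Qed.

Lemma qconnected_completion : qconnected s' t'.
Proof.
have [[conn _] _ _ _ _] := gentle_R; move=> x y; apply: connect_sub (conn x y) => u v.
by move=> /existsP [a adj]; apply: connect1; apply/existsP; exists (Some a).
Qed.

Lemma gentle_completionP : gentle s' t' R' <-> ~ Phi rho rho.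
Proof.
have bounded' := permitted_chains_bounded sign_ok_completion R'_st.
split=> [[_ _ _ _ /bounded' [n bound]] /Phi_rho_rhoP /gamma_loopP [u loop] | no_loop].
  have [l /bound size_l n_l] := cycle_unbounded n (loop : cycle _ (None :: map Some u)).
  by move: (leq_trans size_l n_l); rewrite ltnn.
apply: gentle_of_sign_ok sign_ok_completion R'_st qconnected_completion _.
exact/bounded'/completion_chains_bounded.
Qed.

End Completion.

Theorem lemma4p1 (V A : finType) (s t : A -> V) (R : rel A)
    (sg tau : A -> bool) (al be : A) :
  gentle s t R -> sign_ok s t R sg tau -> isolated s t R sg tau al be ->
  let rho : gpath V A := inr (al, [:: be]) in
  let s' := cs s t al in let t' := ct s t be in let R' := cR R al be in
  let sg' := csg sg tau al in let tau' := ctau sg tau be in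
  let orb := zorbit (Phi_rel s t R sg tau) rho in
  (gentle s' t' R' <-> orb <> [set rho]) /\
  (orb <> [set rho] ->
     [/\ Nset s' t' R' sg' tau' = emb @` (Nset s t R sg tau `\ rho),
         orbits (Phi_rel s' t' R' sg' tau') (Nset s' t' R' sg' tau') =
           [set (image O emb) | O in
              [set O | orbits (Phi_rel s t R sg tau) (Nset s t R sg tau) O /\ O <> orb]]
           `|` [set emb @` (orb `\ rho)],
         Cset s' t' R' sg' tau' = Some @` (Cset s t R sg tau) `|` [set Some al; Some be; None]
       & orbits (Psi_rel s' t' R' sg' tau') (Cset s' t' R' sg' tau') =
           [set (image O Some) | O in orbits (Psi_rel s t R sg tau) (Cset s t R sg tau)]
           `|` [set [set Some al; Some be; None]]]).
Proof.
move=> gentle_R so iso; cbv zeta.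
have R_st := R_st gentle_R.
have orb_set1 := zorbit_set1P (Phi_rel_fun so R_st) (Phi_rel_inj so R_st)
  (Phi_rel_total so R_st (rho_N gentle_R so iso)).
split; first exact: iff_trans (gentle_completionP gentle_R so iso) (not_iff_compat (iff_sym orb_set1)).
move=> orb_neq; split.
- exact: Nset_completion.
- exact: Phi_orbits_completion.
- exact: Cset_completion.
- exact: Psi_orbits_completion.
Qed.
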